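(* Let $d\ge 1$ and $r\geq 0$. The natural maps $H^r(\Gamma(d,1,n+1);\mathbb{Q})\to H^r(\Gamma(d,1,n);\mathbb{Q})$ are surjective for all $n\ge 1$, and they are isomorphisms for $n\geq 2r$ (so $H^r(\Gamma(d,1,n);\mathbb{Q})$ stabilizes for $n\geq 2r$).
   Context: $G(d,1,n)$ is the group of $n\times n$ monomial matrices with nonzero entries $d$-th roots of unity, acting on $\mathbb{C}^n$, with hyperplane arrangement $\mathcal A$ (hyperplanes $z_i=\zeta z_j$, $i<j$, $\zeta^d=1$, and, for $d>1$, $z_i=0$). With $X=\mathbb{C}^n\setminus\bigcup\mathcal A$, $P=\pi_1(X)$, $B=\pi_1(X/G(d,1,n))$, $\Gamma(d,1,n)=B/[P,P]$, and $H^\bullet(\Gamma(d,1,n);\mathbb{Q})\cong\Lambda^\bullet(\mathbb{Q}\mathcal A)^{G(d,1,n)}$. The natural maps are induced by the inclusion $\Gamma(d,1,n)\hookrightarrow\Gamma(d,1,n+1)$ compatible with $G(d,1,n)\hookrightarrow G(d,1,n+1)$, $M\mapsto\mathrm{diag}(M,1)$; on the exterior algebras they send the $d\log$ forms of hyperplanes not involving $z_{n+1}$ to themselves and the others to $0$. *)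

From mathcomp Require Import all_boot all_order all_algebra all_fingroup.
Set Implicit Arguments. Unset Strict Implicit. Unset Printing Implicit Defensive.
Import GRing.Theory.
Local Open Scope ring_scope.

(* ---- Exponents of d-th roots of unity: k : 'I_d stands for zeta^k,
   zeta = exp(2 pi i / d); arithmetic modulo d. ---- *)
Definition rexp_pos (d : nat) (x : 'I_d) : (0 < d)%N :=
  leq_ltn_trans (leq0n x) (ltn_ord x).
Definition rexp_add (d : nat) (x y : 'I_d) : 'I_d :=
  Ordinal (ltn_pmod (x + y)%N (rexp_pos x)).
Definition rexp_sub (d : nat) (x y : 'I_d) : 'I_d :=
  Ordinal (ltn_pmod (x + (d - y))%N (rexp_pos x)).
Definition rexp_opp (d : nat) (x : 'I_d) : 'I_d :=
  Ordinal (ltn_pmod (d - x)%N (rexp_pos x)).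

(* (i, j, k) with i < j : the hyperplane z_i = zeta^k z_j *)
Definition pair_hyp (n d : nat) := {p : 'I_n * 'I_n * 'I_d | (p.1.1 < p.1.2)%N}.
(* i (only when d > 1) : the coordinate hyperplane z_i = 0 *)
Definition coord_hyp (n d : nat) := {i : 'I_n | (1 < d)%N}.
Definition hyp (n d : nat) := (pair_hyp n d + coord_hyp n d)%type.

(* the hyperplane z_i = zeta^k z_j for i <> j, normalised to i < j;
   the default h is only returned when i = j (never used below) *)
Definition mkH (n d : nat) (h : hyp n d) (i j : 'I_n) (k : 'I_d) : hyp n d :=
  match (insub (i, j, k) : option (pair_hyp n d)) with
  | Some p => inl p
  | None =>
    match (insub (j, i, rexp_opp k) : option (pair_hyp n d)) with
    | Some p => inl p
    | None => h
    end
  end.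

(* The element of G(d,1,n) given by s : 'S_n, a : 'I_n -> 'I_d is the
   monomial matrix M with M e_j = zeta^(a j) e_(s j), i.e.
   (M z)_(s j) = zeta^(a j) z_j.  hyp_act s a H = M(H). *)
Definition hyp_act (n d : nat) (s : 'S_n) (a : 'I_n -> 'I_d) (h : hyp n d)
  : hyp n d :=
  match h with
  | inl p => let: (i, j, k) := sval p in
             mkH h (s i) (s j) (rexp_sub (rexp_add k (a i)) (a j))
  | inr c => inr (exist _ (s (sval c)) (svalP c))
  end.

Definition hyp_incl (n d : nat) (h : hyp n d) : hyp n.+1 d :=
  match h with
  | inl p => inl (exist (fun q : 'I_n.+1 * 'I_n.+1 * 'I_d => (q.1.1 < q.1.2)%N)
                  (widen_ord (leqnSn n) (sval p).1.1,
                   widen_ord (leqnSn n) (sval p).1.2, (sval p).2) (svalP p))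
  | inr c => inr (exist _ (widen_ord (leqnSn n) (sval c)) (svalP c))
  end.

(* ---- Degree-r part of the exterior algebra Lambda(Q A) ----
   An element  sum_{t} c(t)/r! * e_(t 0) /\ ... /\ e_(t (r-1))  is represented
   by its alternating coefficient function c on r-tuples of hyperplanes. *)
Definition ext_coef (n d r : nat) := ('I_r -> hyp n d) -> rat.

Definition alternating (n d r : nat) (c : ext_coef n d r) : Prop :=
  (forall t : 'I_r -> hyp n d, ~ injective t -> c t = 0) /\
  (forall (t : 'I_r -> hyp n d) (σ : 'S_r),
      c (t \o σ) = (-1) ^+ odd_perm σ * c t).

(* G(d,1,n)-invariance (G acts on d log forms by permuting hyperplanes) *)
Definition ginvariant (n d r : nat) (c : ext_coef n d r) : Prop :=
  forall (s : 'S_n) (a : 'I_n -> 'I_d) (t : 'I_r -> hyp n d),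
    c (hyp_act s a \o t) = c t.

(* element of Lambda^r(Q A)^{G(d,1,n)} = H^r(Gamma(d,1,n); Q) *)
Definition inv_ext (n d r : nat) (c : ext_coef n d r) : Prop :=
  alternating c /\ ginvariant c.

(* the natural map Lambda^r(Q A(n+1)) -> Lambda^r(Q A(n)):
   e_H |-> e_H if H does not involve z_(n+1), e_H |-> 0 otherwise *)
Definition restrict (n d r : nat) (c : ext_coef n.+1 d r) : ext_coef n d r :=
  fun t => c (hyp_incl (d:=d) \o t).

From mathcomp Require Import all_boot all_order all_algebra all_fingroup.
From Stdlib Require Import ClassicalEpsilon FunctionalExtensionality.
Set Implicit Arguments. Unset Strict Implicit. Unset Printing Implicit Defensive.
Import GRing.Theory.
Local Open Scope ring_scope.

(** An invariant alternating form is a function on r-tuples of hyperplanes that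
    is constant on G(d,1,n+1)-orbits, and restriction keeps exactly its values
    on tuples of hyperplanes not involving z_(n+1), i.e. on tuples coming from
    A(n).  Since G acts on the coordinates a hyperplane involves through its
    permutation part, and r hyperplanes involve at most 2r coordinates, for
    n >= 2r a transposition moves z_(n+1) to a free coordinate and carries any
    tuple into A(n): the restriction is injective.  Conversely an invariant
    form c' on A(n) extends by c (g (incl t')) = c' t' on the orbits meeting
    A(n) and by 0 elsewhere.  This is well defined: if g maps one tuple from
    A(n) to another, composing g with the transposition of z_(n+1) and
    g^-1(z_(n+1)) gives an element of G(d,1,n) with the same effect. *)

Lemma rexp_addE d (x y : 'I_d.+1) : rexp_add x y = x + y.
Proof. exact: val_inj. Qed.

Lemma rexp_oppE d (x : 'I_d.+1) : rexp_opp x = - x.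
Proof. exact: val_inj. Qed.

Lemma rexp_subE d (x y : 'I_d.+1) : rexp_sub x y = x - y.
Proof. by apply: val_inj; rewrite /= modnDmr. Qed.

Lemma lift_perm_fixed n (i : 'I_n.+1) (s : 'S_n.+1) :
  s i = i -> exists s' : 'S_n, s = lift_perm i i s'.
Proof.
move=> si.
have lift_s k : {k' | s (lift i k) = lift i k'}.
  case: (unliftP i (s (lift i k))) => [k' | E]; first by exists k'.
  by case/eqP: (neq_lift i k); apply: (@perm_inj _ s); rewrite si E.
have f_inj : injective (fun k => sval (lift_s k)).
  move=> k1 k2 /(congr1 (lift i)).
  by rewrite -!(svalP (lift_s _)) => /perm_inj /lift_inj.
exists (perm f_inj); apply/permP => k.
case: (unliftP i k) => [k' | ] ->; last by rewrite lift_perm_id.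
by rewrite lift_perm_lift permE -(svalP (lift_s _)).
Qed.

Definition hyp_support n d (h : hyp n d) : seq 'I_n :=
  match h with
  | inl p => [:: (sval p).1.1; (sval p).1.2]
  | inr c => [:: sval c]
  end.

Lemma size_hyp_support n d (h : hyp n d) : (size (hyp_support h) <= 2)%N.
Proof. by case: h. Qed.

Lemma exists_free_coordinate n d r (t : 'I_r -> hyp n d) :
  (2 * r < n)%N -> exists x, forall i, x \notin hyp_support (t i).
Proof.
move=> r_small.
pose used := [seq x | i <- enum 'I_r, x <- hyp_support (t i)].
have size_used : (size used <= 2 * r)%N.
  rewrite size_allpairs_dep sumnE big_map -[r in (_ <= 2 * r)%N]card_ord.
  rewrite mulnC -sum1_card big_distrl /= -big_enum /=.
  by apply: leq_sum => i _; rewrite mul1n size_hyp_support.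
have [x x_unused | all_used] := pickP [pred x | x \notin used].
  exists x => i; apply: contra x_unused => x_supp.
  by apply/allpairsPdep; exists i, x; rewrite mem_enum.
suff : (n <= size used)%N by rewrite leqNgt (leq_ltn_trans size_used r_small).
rewrite -[n in (n <= _)%N]card_ord (leq_trans _ (card_size used)) //.
by apply: subset_leq_card; apply/subsetP => x _; move/negbFE: (all_used x).
Qed.

Section Action.
Variables (n d : nat).
Implicit Types (s : 'S_n) (a : 'I_n -> 'I_d.+1) (h : hyp n d.+1) (k : 'I_d.+1).

Lemma mkH_lt h (i j : 'I_n) k (lt_ij : (i < j)%N) :
  mkH h i j k = inl (exist _ (i, j, k) lt_ij).
Proof. by rewrite /mkH insubT. Qed.

Lemma mkH_gt h (i j : 'I_n) k (lt_ji : (j < i)%N) :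
  mkH h i j k = inl (exist _ (j, i, - k) lt_ji).
Proof. by rewrite /mkH insubF /= ?insubT ?rexp_oppE // ltnNge ltnW. Qed.

Lemma mkH_default h h' (i j : 'I_n) k : i != j -> mkH h i j k = mkH h' i j k.
Proof.
by rewrite neq_ltn => /orP[] lt; rewrite !(mkH_lt _ _ lt, mkH_gt _ _ lt).
Qed.

Lemma mkH_swap h h' (i j : 'I_n) k : i != j -> mkH h i j k = mkH h' j i (- k).
Proof.
by rewrite neq_ltn => /orP[] lt; rewrite (mkH_lt _ _ lt) (mkH_gt _ _ lt) ?opprK.
Qed.

Lemma mem_support_mkH h (i j : 'I_n) k x : i != j ->
  (x \in hyp_support (mkH h i j k)) = (x == i) || (x == j).
Proof.
rewrite neq_ltn => /orP[] lt; first by rewrite (mkH_lt _ _ lt) !inE.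
by rewrite (mkH_gt _ _ lt) !inE orbC.
Qed.

Lemma hyp_act_mkH s a h h' (i j : 'I_n) k : i != j ->
  hyp_act s a (mkH h i j k) = mkH h' (s i) (s j) (k + a i - a j).
Proof.
move=> neq_ij; have neq_sij : s i != s j by rewrite (inj_eq perm_inj).
move: (neq_ij); rewrite neq_ltn => /orP[] lt.
  by rewrite (mkH_lt _ _ lt) /= rexp_subE rexp_addE; apply: mkH_default.
rewrite (mkH_gt _ _ lt) /= rexp_subE rexp_addE (mkH_swap _ h') 1?eq_sym //.
by congr mkH; rewrite !opprD !opprK addrAC.
Qed.

Lemma mem_support_act s a h x :
  (s x \in hyp_support (hyp_act s a h)) = (x \in hyp_support h).
Proof.
case: h => [[[[i j] k] lt] | [i gt1]] /=; last by rewrite !inE (inj_eq perm_inj).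
by rewrite mem_support_mkH ?(inj_eq perm_inj) ?inE // neq_ltn lt.
Qed.

Lemma eq_hyp_act_on_support s s' a a' h :
  {in hyp_support h, s =1 s'} -> {in hyp_support h, a =1 a'} ->
  hyp_act s a h = hyp_act s' a' h.
Proof.
case: h => [[[[i j] k] lt] | [i gt1]] /= eq_s eq_a; last first.
  by rewrite eq_s ?mem_head.
by rewrite !eq_s ?eq_a // !inE eqxx ?orbT.
Qed.

Lemma hyp_act1 h : hyp_act 1 (fun=> 0) h = h.
Proof.
case: h => [[[[i j] k] lt] | [i gt1]] /=.
  by rewrite !perm1 rexp_subE rexp_addE addr0 subr0 (mkH_lt _ _ lt).
by congr inr; apply: val_inj; rewrite /= perm1.
Qed.

Lemma hyp_actM s1 s2 a1 a2 h :
  hyp_act s2 a2 (hyp_act s1 a1 h) =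
  hyp_act (s1 * s2)%g (fun x => a1 x + a2 (s1 x)) h.
Proof.
case: h => [[[[i j] k] lt] | [i gt1]] /=; last first.
  by congr inr; apply: val_inj; rewrite /= permM.
rewrite (hyp_act_mkH _ _ _ (inl (exist _ (i, j, k) lt))); last first.
  by rewrite (inj_eq perm_inj) neq_ltn lt.
rewrite !permM !rexp_subE !rexp_addE; congr mkH.
by rewrite opprD !addrA; congr (_ + _); rewrite addrAC -!addrA [- a1 j + _]addrC.
Qed.

Lemma hyp_actK s a h :
  hyp_act s^-1%g (fun x => - a (s^-1%g x)) (hyp_act s a h) = h.
Proof.
rewrite hyp_actM -[RHS]hyp_act1.
by apply: eq_hyp_act_on_support => x _; rewrite ?permM ?permK ?perm1 ?subrr.
Qed.

End Action.

Section Inclusion.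
Variables (n d : nat).
Local Notation incl := (@hyp_incl n d.+1).
Local Notation lmax := (lift ord_max).

Lemma widen_lift_max (x : 'I_n) : widen_ord (leqnSn n) x = lmax x.
Proof. by apply: ord_inj; rewrite lift_max. Qed.

Lemma hyp_incl_inj : injective incl.
Proof.
move=> [[[[i j] k] lt] | [i gt1]] [[[[i' j'] k'] lt'] | [i' gt1']] //= [].
  move=> /val_inj eq_i /val_inj eq_j eq_k; subst.
  by congr inl; apply: val_inj.
by move=> /val_inj eq_i; subst; congr inr; apply: val_inj.
Qed.

Lemma support_incl h : hyp_support (incl h) = map lmax (hyp_support h).
Proof. by case: h => [[[[i j] k] lt] | [i gt1]]; rewrite /= !widen_lift_max. Qed.

Lemma max_notin_support_incl h : ord_max \notin hyp_support (incl h).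
Proof.
by rewrite support_incl; apply/mapP => -[x _ /eqP]; apply/negP/neq_lift.
Qed.

Lemma hyp_incl_of_max_notin (h : hyp n.+1 d.+1) :
  ord_max \notin hyp_support h -> exists h', h = incl h'.
Proof.
case: h => [[[[i j] k] lt] | [i gt1]]; rewrite /= !inE; last first.
  move=> /unlift_some[i' -> _].
  exists (inr (exist _ i' gt1)).
  by congr inr; apply: val_inj; rewrite /= widen_lift_max.
move=> /norP[/unlift_some[i' eq_i _] /unlift_some[j' eq_j _]].
have lt' : (i' < j')%N by rewrite -(lift_max i') -(lift_max j') -eq_i -eq_j.
exists (inl (exist _ (i', j', k) lt')); congr inl; apply: val_inj.
by rewrite /= !widen_lift_max -eq_i -eq_j.
Qed.

Lemma incl_mkH h h' (i j : 'I_n) k : i != j ->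
  incl (mkH h i j k) = mkH h' (lmax i) (lmax j) k.
Proof.
rewrite -!widen_lift_max neq_ltn => /orP[] lt.
  rewrite (mkH_lt _ _ lt) (@mkH_lt _ _ h' (widen_ord _ i) (widen_ord _ j) k lt).
  by congr inl; apply: val_inj.
rewrite (mkH_gt _ _ lt) (@mkH_gt _ _ h' (widen_ord _ i) (widen_ord _ j) k lt).
by congr inl; apply: val_inj.
Qed.

Lemma hyp_act_incl (s : 'S_n) (a : 'I_n.+1 -> 'I_d.+1) h :
  hyp_act (lift_perm ord_max ord_max s) a (incl h) =
  incl (hyp_act s (fun x => a (lmax x)) h).
Proof.
case: h => [[[[i j] k] lt] | [i gt1]] /=; last first.
  by congr inr; apply: val_inj; rewrite /= !widen_lift_max lift_perm_lift.
have neq_sij : s i != s j by rewrite (inj_eq perm_inj) neq_ltn lt.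
(* Freeze the default argument of [mkH]: its proof term mentions [widen_ord]. *)
set D := (X in mkH X _ _ _ = _).
by rewrite (incl_mkH _ D) // !widen_lift_max !lift_perm_lift.
Qed.

Lemma act_incl_descends r (s : 'S_n.+1) a (t1 t2 : 'I_r -> hyp n d.+1) :
  (forall i, hyp_act s a (incl (t1 i)) = incl (t2 i)) ->
  exists s' a', forall i, t2 i = hyp_act s' a' (t1 i).
Proof.
move=> act_t1.
pose m := (s^-1)%g ord_max.
have [s' s_fixed] :
    exists s', (tperm m ord_max * s)%g = lift_perm ord_max ord_max s'.
  by apply: lift_perm_fixed; rewrite permM tpermR permKV.
exists s', (fun x => a (lmax x)) => i; apply: hyp_incl_inj.
rewrite -act_t1 -hyp_act_incl -s_fixed.
apply: eq_hyp_act_on_support => // x supp_x; rewrite permM tpermD //.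
  apply: contraTneq supp_x => <-.
  by rewrite -(mem_support_act s a) /m permKV act_t1 max_notin_support_incl.
by apply: contraTneq supp_x => <-; rewrite max_notin_support_incl.
Qed.

End Inclusion.

Section Restriction.
Variables (n d r : nat).
Local Notation incl := (@hyp_incl n d.+1).

Lemma alternating_restrict (c : ext_coef n.+1 d.+1 r) :
  alternating c -> alternating (restrict c).
Proof.
case=> c_inj c_perm; split=> [t not_inj | t σ]; last exact: c_perm.
apply: c_inj => inj_t; apply: not_inj => x y eq_xy.
by apply: inj_t; rewrite /= eq_xy.
Qed.

Lemma ginvariant_restrict (c : ext_coef n.+1 d.+1 r) :
  ginvariant c -> ginvariant (restrict c).
Proof.
move=> c_inv s a t; rewrite /restrict; pose a' x := oapp a 0 (unlift ord_max x).
have -> : incl \o (hyp_act s a \o t) =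
          hyp_act (lift_perm ord_max ord_max s) a' \o (incl \o t).
  apply: functional_extensionality => i /=; rewrite hyp_act_incl.
  by congr incl; apply: eq_hyp_act_on_support => // x _; rewrite /a' liftK.
exact: c_inv.
Qed.

Lemma restrict_inj (c1 c2 : ext_coef n.+1 d.+1 r) :
  (2 * r <= n)%N -> ginvariant c1 -> ginvariant c2 ->
  restrict c1 =1 restrict c2 -> c1 =1 c2.
Proof.
move=> r_small c1_inv c2_inv eq_restrict t.
have [m m_free] := exists_free_coordinate t (r_small : (2 * r < n.+1)%N).
pose τ := tperm m ord_max.
have [t' tE] : exists t', hyp_act τ (fun=> 0) \o t = incl \o t'.
  have /fin_all_exists[t' tE] i : exists h, hyp_act τ (fun=> 0) (t i) = incl h.
    by apply: hyp_incl_of_max_notin; rewrite -(tpermL m ord_max) mem_support_act.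
  by exists t'; apply: functional_extensionality.
by rewrite -(c1_inv τ (fun=> 0)) -(c2_inv τ (fun=> 0)) tE; apply: eq_restrict.
Qed.

Definition incl_orbit (t : 'I_r -> hyp n.+1 d.+1) (t' : 'I_r -> hyp n d.+1) :=
  exists s a, forall i, hyp_act s a (t i) = incl (t' i).

Lemma incl_orbit_incl t' : incl_orbit (incl \o t') t'.
Proof. by exists 1%g, (fun=> 0) => i; rewrite hyp_act1. Qed.

Lemma incl_orbit_comp (f : 'I_r -> 'I_r) t t' :
  incl_orbit t t' -> incl_orbit (t \o f) (t' \o f).
Proof. by case=> s [a act_t]; exists s, a => i; apply: act_t. Qed.

Lemma incl_orbit_act s a t t' :
  incl_orbit (hyp_act s a \o t) t' <-> incl_orbit t t'.
Proof.
split=> -[s1 [a1 act_t]].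
  by exists (s * s1)%g, (fun x => a x + a1 (s x)) => i; rewrite -hyp_actM act_t.
exists (s^-1 * s1)%g, (fun x => - a (s^-1%g x) + a1 (s^-1%g x)) => i.
by rewrite /= -hyp_actM hyp_actK act_t.
Qed.

Lemma incl_orbit_inj t t' : incl_orbit t t' -> injective t' -> injective t.
Proof.
case=> s [a act_t] inj_t' i j eq_t; apply: inj_t'; apply: hyp_incl_inj.
by rewrite -!act_t eq_t.
Qed.

Lemma incl_orbit_unique (c' : ext_coef n d.+1 r) t t1 t2 : ginvariant c' ->
  incl_orbit t t1 -> incl_orbit t t2 -> c' t1 = c' t2.
Proof.
move=> c_inv [s1 [a1 act1]] [s2 [a2 act2]].
have [s [a t2E]] : exists s a, forall i, t2 i = hyp_act s a (t1 i).
  apply: (@act_incl_descends _ _ _ (s1^-1 * s2)%g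
            (fun x => - a1 (s1^-1%g x) + a2 (s1^-1%g x))) => i.
  by rewrite -hyp_actM -act1 hyp_actK act2.
rewrite -(c_inv s a t1); congr c'.
by apply: functional_extensionality => i; rewrite t2E.
Qed.

Definition extend (c' : ext_coef n d.+1 r) : ext_coef n.+1 d.+1 r := fun t =>
  match excluded_middle_informative (exists t', incl_orbit t t') with
  | left orbit => c' (proj1_sig (constructive_indefinite_description _ orbit))
  | right _ => 0
  end.

Lemma extend_orbit (c' : ext_coef n d.+1 r) t t' :
  ginvariant c' -> incl_orbit t t' -> extend c' t = c' t'.
Proof.
move=> c_inv orbit; rewrite /extend.
case: excluded_middle_informative => [orbit' | []]; last by exists t'.
case: constructive_indefinite_description => t'' orbit'' /=.
exact: incl_orbit_unique orbit.
Qed.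

Lemma extend_out (c' : ext_coef n d.+1 r) t :
  ~ (exists t', incl_orbit t t') -> extend c' t = 0.
Proof.
by move=> no_orbit; rewrite /extend; case: excluded_middle_informative.
Qed.

Lemma alternating_extend (c' : ext_coef n d.+1 r) :
  alternating c' -> ginvariant c' -> alternating (extend c').
Proof.
move=> [c_inj c_perm] c_inv; split=> [t not_inj | t σ].
  have [[t' orbit] | no_orbit] := classic (exists t', incl_orbit t t');
    last exact: extend_out.
  rewrite (extend_orbit c_inv orbit); apply: c_inj => inj_t'.
  exact/not_inj/(incl_orbit_inj orbit).
have [[t' orbit] | no_orbit] := classic (exists t', incl_orbit t t').
  rewrite (extend_orbit c_inv orbit) -c_perm.
  exact: extend_orbit c_inv (incl_orbit_comp σ orbit).
rewrite (extend_out _ no_orbit) mulr0; apply: extend_out => -[t' orbit].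
apply: no_orbit.
exists (t' \o σ^-1%g); have := incl_orbit_comp σ^-1%g orbit.
by congr incl_orbit; apply: functional_extensionality => i /=; rewrite permKV.
Qed.

Lemma ginvariant_extend (c' : ext_coef n d.+1 r) :
  ginvariant c' -> ginvariant (extend c').
Proof.
move=> c_inv s a t.
have [[t' orbit] | no_orbit] := classic (exists t', incl_orbit t t').
  rewrite (extend_orbit c_inv orbit); apply: extend_orbit => //.
  exact/incl_orbit_act.
rewrite (extend_out _ no_orbit); apply: extend_out => -[t' /incl_orbit_act orbit].
by apply: no_orbit; exists t'.
Qed.

Lemma restrict_extend (c' : ext_coef n d.+1 r) :
  ginvariant c' -> restrict (extend c') =1 c'.
Proof. by move=> c_inv t; apply: extend_orbit => //; apply: incl_orbit_incl. Qed.

End Restriction.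

Theorem proposition3p21 (d r : nat) : (1 <= d)%N ->
  forall n : nat, (1 <= n)%N ->
    (* the natural map is well defined on invariants *)
    (forall c : ext_coef n.+1 d r, inv_ext c -> inv_ext (restrict c)) /\
    (* surjective *)
    (forall c' : ext_coef n d r, inv_ext c' ->
       exists c : ext_coef n.+1 d r,
         inv_ext c /\ forall t, restrict c t = c' t) /\
    (* injective (hence an isomorphism) for n >= 2r *)
    ((2 * r <= n)%N ->
     forall c1 c2 : ext_coef n.+1 d r, inv_ext c1 -> inv_ext c2 ->
       (forall t, restrict c1 t = restrict c2 t) -> forall t, c1 t = c2 t).
Proof.
case: d => [// | d] _ n _; split; [|split].
- move=> c [c_alt c_inv].
  by split; [apply: alternating_restrict | apply: ginvariant_restrict].
- move=> c' [c_alt c_inv]; exists (extend c'); split; last exact: restrict_extend.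
  by split; [apply: alternating_extend | apply: ginvariant_extend].
- by move=> r_small c1 c2 [_ c1_inv] [_ c2_inv]; apply: restrict_inj.
Qed.
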